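(* Let $\lambda=\bar p/(1-\bar p)$. For every distribution $\eta$ on $\mathcal R$, $\lim_{n\to\infty}E_\eta[S_n]/n=\lambda$. Moreover there exist constants $c_1,c_2>0$ such that for every $n\in\mathbb N$ and every distribution $\eta$ on $\mathcal R$, $$\big|E_\eta[S_n]-\lambda n-\eta\cdot\mathbf r\big|\le c_1e^{-c_2n},\qquad\text{where } \mathbf r=\Big(I-K+\frac{(\mathbf 1-\mathbf p)\mu D_{1-p}K}{1-\bar p}\Big)^{-1}\mathbf p-\lambda\mathbf 1.$$
   Context: Let $\mathcal R=\{1,\dots,N\}$ and let $K$ be a stochastic matrix on $\mathcal R$ whose Markov chain has a unique closed irreducible subset; let $\mu$ (row vector) be its unique stationary distribution. Fix $p:\mathcal R\to(0,1)$, $\mathbf p=(p(1),\dots,p(N))^t$, $\mathbf 1$ the all-ones column vector, $I$ the identity, $D_p$ the diagonal matrix with entries $p(i)$, $D_{1-p}=I-D_p$, $\bar p=\mu\cdot\mathbf p$. Under $P_\eta$, $(R_j)_{j\ge1}$ is a Markov chain with transition matrix $K$ and $R_1\sim\eta$, and given $(R_j)$ the $\xi(j)$, $j\ge1$, are independent Bernoulli$(p(R_j))$ (a ''success'' if $\xi(j)=1$, ''failure'' otherwise). $S_n=\inf\{k\ge0:\sum_{j=1}^{k+n}(1-\xi(j))=n\}$ is the number of successes before the $n$-th failure. (Equivalently $E_\eta[S_n]$ is the mean of one step $U_1$ of the forward branching-like process started from $U_0=n$.) *)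

From HB Require Import structures.
From mathcomp Require Import all_boot all_order all_algebra.
From mathcomp Require Import all_classical all_reals all_analysis.
Set Implicit Arguments. Unset Strict Implicit. Unset Printing Implicit Defensive.
Import Order.TTheory GRing.Theory Num.Theory.
Local Open Scope ring_scope.

Section Defs.
Variables (R : realType) (N : nat).

Definition stochastic (K : 'M[R]_N) : Prop :=
  (forall i j, 0 <= K i j) /\ (forall i, \sum_j K i j = 1).

Definition is_distr (eta : 'rV[R]_N) : Prop :=
  (forall i, 0 <= eta 0 i) /\ \sum_i eta 0 i = 1.

Definition closed_set (K : 'M[R]_N) (C : {set 'I_N}) : Prop :=
  (exists i, i \in C) /\ forall i j, i \in C -> 0 < K i j -> j \in C.

Definition closed_irreducible (K : 'M[R]_N) (C : {set 'I_N}) : Prop :=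
  closed_set K C /\
  forall i j, i \in C -> j \in C -> exists t : nat, 0 < (K ^+ t) i j.

Definition unique_closed_irreducible (K : 'M[R]_N) : Prop :=
  exists C, closed_irreducible K C /\
    forall C', closed_irreducible K C' -> C' = C.

Definition is_stationary (K : 'M[R]_N) (mu : 'rV[R]_N) : Prop :=
  is_distr mu /\ mu *m K = mu.

Definition pcol (p : 'I_N -> R) : 'cV[R]_N := \col_i p i.

Definition fails m (xi : {ffun 'I_m -> bool}) (j : nat) : nat :=
  \sum_(i < m | (i < j)%N) (~~ xi i : nat).

(* P_eta of the cylinder (R_1..R_m) = r, (xi(1)..xi(m)) = xi *)
Definition path_weight (K : 'M[R]_N) (p : 'I_N -> R) (eta : 'rV[R]_N) m
    (r : {ffun 'I_m -> 'I_N}) (xi : {ffun 'I_m -> bool}) : R :=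
  (\prod_(i : 'I_m) (if val i == 0%N then eta 0 (r i) else 1)) *
  (\prod_(i : 'I_m) \prod_(j : 'I_m | val j == (val i).+1) K (r i) (r j)) *
  (\prod_(i : 'I_m) (if xi i then p (r i) else 1 - p (r i))).

Definition prob_event (K : 'M[R]_N) (p : 'I_N -> R) (eta : 'rV[R]_N) m
    (E : {ffun 'I_m -> bool} -> bool) : R :=
  \sum_(r : {ffun 'I_m -> 'I_N}) \sum_(xi : {ffun 'I_m -> bool})
     path_weight K p eta r xi * (E xi)%:R.

(* P_eta(S_n = k), with S_n = inf{k >= 0 : sum_{j<=k+n} (1 - xi j) = n};
   the event only depends on the first n+k trials *)
Definition prob_S (K : 'M[R]_N) (p : 'I_N -> R) (eta : 'rV[R]_N) (n k : nat) : R :=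
  prob_event K p eta (fun xi : {ffun 'I_(n + k) -> bool} =>
    (fails xi (k + n) == n)%N && [forall k' : 'I_k, (fails xi (k' + n) != n)%N]).

Definition ES (K : 'M[R]_N) (p : 'I_N -> R) (eta : 'rV[R]_N) (n : nat) : \bar R :=
  (\sum_(0 <= k <oo) ((k%:R * prob_S K p eta n k)%:E))%E.

End Defs.

From HB Require Import structures.
From mathcomp Require Import all_boot all_order all_algebra.
From mathcomp Require Import all_classical all_reals all_analysis.
From mathcomp Require Import ring lra zify.
Set Implicit Arguments. Unset Strict Implicit. Unset Printing Implicit Defensive.
Import Order.TTheory GRing.Theory Num.Theory.
Import numFieldNormedType.Exports.
Local Open Scope ring_scope.

(* Write K = U + F, where U = D_p K (resp. F = D_{1-p} K) weighs a success (resp. a failure)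
   at the current state followed by a move of the chain. The states at successive failures
   form a Markov chain with kernel Q = (I - U)^-1 F, and the successes collected before the
   first failure have mean f = (I - U)^-1 p; hence the column e_n = (E_i[S_n])_i satisfies
   e_n = f + Q e_(n-1), and E_eta[S_n] = eta e_n. The kernel Q is stochastic with invariant
   law nu = mu F / (1 - pbar), and the unique closed class yields a state c with Q i c >= delta > 0
   for all i, so that Q^n g converges to nu g at rate (1 - delta)^n (Doeblin). Since
   I - K = (I - U)(I - Q), the vector r = M^-1 p - lam 1 solves the Poisson equation
   (I - Q) r = f - lam 1 with nu r = 0; therefore e_n = lam n 1 + r - Q^n r, and the error
   eta Q^n r is exponentially small. *)

Section NonnegativeMatrices.
Variable R : realFieldType.

Definition nnegmx m n (A : 'M[R]_(m, n)) := forall i j, 0 <= A i j.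
Definition lemx m n (A B : 'M[R]_(m, n)) := forall i j, A i j <= B i j.

Lemma nnegmxD m n (A B : 'M[R]_(m, n)) : nnegmx A -> nnegmx B -> nnegmx (A + B).
Proof. by move=> hA hB i j; rewrite mxE addr_ge0. Qed.

Lemma nnegmxM m n l (A : 'M[R]_(m, n)) (B : 'M[R]_(n, l)) :
  nnegmx A -> nnegmx B -> nnegmx (A *m B).
Proof. by move=> hA hB i j; rewrite mxE sumr_ge0 // => t _; rewrite mulr_ge0. Qed.

Lemma nnegmxX n (A : 'M[R]_n) t : nnegmx A -> nnegmx (A ^+ t).
Proof.
move=> hA; elim: t => [|t IH]; first by move=> i j; rewrite expr0 mxE ler0n.
by rewrite exprS -mulmxE; apply: nnegmxM.
Qed.

Lemma lemx_trans m n (A B C : 'M[R]_(m, n)) : lemx A B -> lemx B C -> lemx A C.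
Proof. by move=> hAB hBC i j; apply: le_trans (hAB i j) (hBC i j). Qed.

Lemma lemxD m n (A B C D : 'M[R]_(m, n)) : lemx A B -> lemx C D -> lemx (A + C) (B + D).
Proof. by move=> hAB hCD i j; rewrite !mxE lerD. Qed.

Lemma lemx_mul2l m n l (A : 'M[R]_(m, n)) (B C : 'M[R]_(n, l)) :
  nnegmx A -> lemx B C -> lemx (A *m B) (A *m C).
Proof. by move=> hA hBC i j; rewrite !mxE ler_sum // => t _; apply: ler_wpM2l. Qed.

Lemma lemx_mul2r m n l (A B : 'M[R]_(m, n)) (C : 'M[R]_(n, l)) :
  nnegmx C -> lemx A B -> lemx (A *m C) (B *m C).
Proof. by move=> hC hAB i j; rewrite !mxE ler_sum // => t _; apply: ler_wpM2r. Qed.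

Lemma mulmx_entry_gt0 m n l (A : 'M[R]_(m, n)) (B : 'M[R]_(n, l)) i j k :
  nnegmx A -> nnegmx B -> 0 < A i j -> 0 < B j k -> 0 < (A *m B) i k.
Proof.
move=> hA hB hij hjk; rewrite mxE (bigD1 j) //=.
by rewrite ltr_wpDr ?mulr_gt0 // sumr_ge0 // => t _; rewrite mulr_ge0.
Qed.

Lemma psumr_gt0_exists (I : finType) (F : I -> R) :
  (forall i, 0 <= F i) -> 0 < \sum_i F i -> exists i, 0 < F i.
Proof.
move=> hF /lt0r_neq0/eqP /(psumr_neq0P (fun i _ => hF i)) [i /andP [_ hi]].
by exists i.
Qed.

Lemma mulr_gt0_nneg (x y : R) : 0 <= x -> 0 <= y -> 0 < x * y -> 0 < x /\ 0 < y.
Proof.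
move=> hx hy hxy; split; rewrite lt0r ?hx ?hy andbT;
  by apply: contraTneq hxy => ->; rewrite ?mul0r ?mulr0 ltxx.
Qed.

Definition supp_sub m n (A B : 'M[R]_(m, n)) := forall i j, 0 < A i j -> 0 < B i j.

Lemma supp_sub_mul m n l (A A' : 'M[R]_(m, n)) (B B' : 'M[R]_(n, l)) :
  nnegmx A -> nnegmx B -> nnegmx A' -> nnegmx B' ->
  supp_sub A A' -> supp_sub B B' -> supp_sub (A *m B) (A' *m B').
Proof.
move=> hA hB hA' hB' sA sB i k; rewrite mxE.
case/psumr_gt0_exists => [j|j /mulr_gt0_nneg [] // hij hjk]; first by rewrite mulr_ge0.
exact: mulmx_entry_gt0 (sA _ _ hij) (sB _ _ hjk).
Qed.

Lemma mxker0_unitmx n (A : 'M[R]_n) :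
  (forall y : 'cV_n, A *m y = 0 -> y = 0) -> A \in unitmx.
Proof.
move=> hA; rewrite -unitmx_tr -row_free_unit; apply/inj_row_free => v hv.
have /hA hvT : A *m v^T = 0 by rewrite -[A]trmxK -trmx_mul hv trmx0.
by rewrite -[v]trmxK hvT trmx0.
Qed.

Lemma lemx_row_avg n (w : 'rV[R]_n) (g : 'cV[R]_n) a b :
  (forall j, 0 <= w 0 j) -> (forall j, a <= g j 0 <= b) ->
  (\sum_j w 0 j) * a <= (w *m g) 0 0 <= (\sum_j w 0 j) * b.
Proof.
move=> hw hg; rewrite mxE !mulr_suml; apply/andP; split; apply: ler_sum => j _;
  by apply: ler_wpM2l => //; case/andP: (hg j).
Qed.

End NonnegativeMatrices.
Section Substochastic.
Variables (R : realFieldType) (n : nat) (A : 'M[R]_n.+1).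
Hypothesis A_ge0 : nnegmx A.
Hypothesis A_rowsum_lt1 : forall i, \sum_j A i j < 1.

Lemma substochastic_min_principle (y g : 'cV[R]_n.+1) :
  y = A *m y + g -> nnegmx g -> nnegmx y.
Proof.
move=> hy hg.
have [i _ ymin] := @arg_minP _ R _ ord0 xpredT (fun i => y i 0) isT.
suff yi_ge0 : 0 <= y i 0.
  by move=> j k; rewrite (ord1 k); apply: le_trans yi_ge0 (ymin j isT).
have yiE : y i 0 = (A *m y) i 0 + g i 0 by rewrite {1}hy mxE.
have Ay_ge : (\sum_j A i j) * y i 0 <= (A *m y) i 0.
  by rewrite mxE mulr_suml ler_sum // => j _; rewrite ler_wpM2l ?ymin.
have : 0 <= (1 - \sum_j A i j) * y i 0.
  by rewrite mulrBl mul1r subr_ge0 (le_trans Ay_ge) // yiE lerDl hg.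
by rewrite pmulr_rge0 // subr_gt0.
Qed.

Lemma unitmx_1_sub : 1%:M - A \in unitmx.
Proof.
apply: mxker0_unitmx => y /eqP; rewrite mulmxBl mul1mx subr_eq0 => /eqP yE.
have y_ge0 : nnegmx y.
  by apply: (@substochastic_min_principle y 0); rewrite ?addr0 // => i j; rewrite mxE.
have yN_ge0 : nnegmx (- y).
  by apply: (@substochastic_min_principle _ 0); rewrite ?addr0 ?mulmxN -?yE // => i j; rewrite mxE.
apply/matrixP => i j; apply/eqP; rewrite mxE eq_le y_ge0 andbT.
by have := yN_ge0 i j; rewrite mxE oppr_ge0.
Qed.

Definition greenmx := invmx (1%:M - A).

Lemma mulmx_1_sub_green : (1%:M - A) *m greenmx = 1%:M.
Proof. exact: mulmxV unitmx_1_sub. Qed.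

Lemma mulmx_green_1_sub : greenmx *m (1%:M - A) = 1%:M.
Proof. exact: mulVmx unitmx_1_sub. Qed.

Lemma greenmxE : greenmx = 1%:M + A *m greenmx.
Proof. by have := mulmx_1_sub_green; rewrite mulmxBl mul1mx => <-; rewrite subrK. Qed.

Lemma greenmx_ge0 : nnegmx greenmx.
Proof.
move=> i j.
have e_ge0 : nnegmx (delta_mx j 0 : 'cV[R]_n.+1).
  by move=> a b; rewrite mxE; case: (_ && _).
have := substochastic_min_principle _ e_ge0 i 0.
move/(_ (greenmx *m delta_mx j 0)); rewrite -colE mxE; apply.
by rewrite colE {1}greenmxE mulmxDl mul1mx addrC mulmxA.
Qed.

Lemma exp_le_greenmx t : lemx (A ^+ t) greenmx.
Proof.
have greenmx_ge1 : lemx 1%:M greenmx.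
  by move=> i j; rewrite [in X in _ <= X]greenmxE [leRHS]mxE lerDl (nnegmxM A_ge0 greenmx_ge0).
elim: t => [|t IH]; first by rewrite expr0.
rewrite exprS -mulmxE; apply: lemx_trans (lemx_mul2l A_ge0 IH) _.
by move=> i j; rewrite [in X in _ <= X]greenmxE [leRHS]mxE lerDr mxE ler0n.
Qed.

End Substochastic.

Section DoeblinContraction.
Variables (R : realFieldType) (n : nat) (Q : 'M[R]_n.+1).
Variables (c : 'I_n.+1) (delta : R).
Hypothesis Q_ge0 : nnegmx Q.
Hypothesis Q_rowsum1 : forall i, \sum_j Q i j = 1.
Hypothesis delta_le_Q : forall i, delta <= Q i c.

Lemma delta_le1 : delta <= 1.
Proof.
apply: le_trans (delta_le_Q c) _; rewrite -(Q_rowsum1 c) (bigD1 c) //=.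
by rewrite lerDl sumr_ge0.
Qed.

(* Row i of Q is delta times the Dirac mass at c plus a nonnegative remainder of mass 1 - delta. *)
Lemma doeblin_contract (g : 'cV[R]_n.+1) a w : 0 <= w ->
  (forall j, a <= g j 0 <= a + w) ->
  exists a', forall i, a' <= (Q *m g) i 0 <= a' + (1 - delta) * w.
Proof.
move=> w_ge0 hg; exists (delta * g c 0 + (1 - delta) * a) => i.
pose r := \row_j (Q i j - (j == c)%:R * delta).
have r_ge0 j : 0 <= r 0 j.
  rewrite mxE; case: eqVneq => [->|_]; first by rewrite mul1r subr_ge0.
  by rewrite mul0r subr0.
have dirac_sum (h : 'I_n.+1 -> R) : \sum_j (j == c)%:R * h j = h c.
  by rewrite (bigD1 c) //= eqxx mul1r big1 ?addr0 // => j /negbTE ->; rewrite mul0r.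
have r_sum : \sum_j r 0 j = 1 - delta.
  under eq_bigr do rewrite mxE.
  by rewrite sumrB Q_rowsum1 (dirac_sum (fun=> delta)).
have QgE : (Q *m g) i 0 = delta * g c 0 + (r *m g) 0 0.
  rewrite !mxE -(dirac_sum (fun j => delta * g j 0)).
  rewrite -big_split; apply: eq_bigr => j _ /=; rewrite !mxE; ring.
have := lemx_row_avg r_ge0 hg; rewrite r_sum QgE => /andP [lo hi].
by apply/andP; split; lra.
Qed.

Lemma doeblin_contractX (g : 'cV[R]_n.+1) a w : 0 <= w ->
  (forall j, a <= g j 0 <= a + w) ->
  forall k, exists a', forall i, a' <= (Q ^+ k *m g) i 0 <= a' + (1 - delta) ^+ k * w.
Proof.
move=> w_ge0 hg; elim=> [|k [a' IH]]; first by exists a => i; rewrite expr0 mul1mx mul1r.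
have w'_ge0 : 0 <= (1 - delta) ^+ k * w by rewrite mulr_ge0 // exprn_ge0 // subr_ge0 delta_le1.
have [a'' h] := doeblin_contract w'_ge0 IH.
by exists a'' => i; rewrite exprS -mulmxE -mulmxA exprS -mulrA h.
Qed.

Lemma doeblin_fixed_const (y : 'cV[R]_n.+1) : 0 < delta -> Q *m y = y ->
  forall i j, y i 0 = y j 0.
Proof.
move=> delta_gt0 Qy.
have [imax _ ymax] := @arg_maxP _ R _ ord0 xpredT (fun i => y i 0) isT.
have [imin _ ymin] := @arg_minP _ R _ ord0 xpredT (fun i => y i 0) isT.
have yb j : y imin 0 <= y j 0 <= y imin 0 + (y imax 0 - y imin 0).
  by rewrite addrC subrK; apply/andP; split; [exact: ymin | exact: ymax].
have w_ge0 : 0 <= y imax 0 - y imin 0 by rewrite subr_ge0; exact: ymin.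
have [a' ha] := doeblin_contract w_ge0 yb; rewrite Qy in ha.
have := ha imax; have := ha imin => /andP [a'_le _] /andP [_ le_a'].
have : delta * (y imax 0 - y imin 0) <= 0 by lra.
rewrite pmulr_rle0 // => w_le0.
have osc0 : y imax 0 - y imin 0 = 0 by lra.
by move=> i j; have := yb i; have := yb j; rewrite osc0 addr0 => /andP [? ?] /andP [? ?]; lra.
Qed.

Section Stationary.
Variable nu : 'rV[R]_n.+1.
Hypothesis nu_ge0 : forall j, 0 <= nu 0 j.
Hypothesis nu_sum1 : \sum_j nu 0 j = 1.
Hypothesis nuQ : nu *m Q = nu.

Lemma doeblin_mixing (g : 'cV[R]_n.+1) B : (forall j, `|g j 0| <= B) ->
  forall k i, `|(Q ^+ k *m g) i 0 - (nu *m g) 0 0| <= (1 - delta) ^+ k * (B + B).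
Proof.
move=> hB k i.
have hg j : - B <= g j 0 <= - B + (B + B).
  by have := hB j; rewrite ler_norml => /andP [? ?]; apply/andP; split; lra.
have B_ge0 : 0 <= B + B by have := hB 0; have := normr_ge0 (g 0 0); lra.
have [a' ha] := doeblin_contractX B_ge0 hg k.
have nuQk : nu *m Q ^+ k = nu.
  by elim: k {ha} => [|k IH]; rewrite ?expr0 ?mulmx1 // exprS -mulmxE mulmxA nuQ.
have := lemx_row_avg nu_ge0 ha; rewrite nu_sum1 !mul1r mulmxA nuQk.
have := ha i; rewrite ler_norml; set W := _ * (B + B) => /andP [? ?] /andP [? ?].
by apply/andP; split; lra.
Qed.

End Stationary.
End DoeblinContraction.

Section Reachability.
Variables (R : realType) (n : nat) (K : 'M[R]_n).
Hypothesis K_ge0 : nnegmx K.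
Hypothesis K_rowsum1 : forall i, \sum_j K i j = 1.

Definition reach i j := exists t, 0 < (K ^+ t) i j.
Definition reach_set i : {set 'I_n} := [set j | `[< reach i j >] ].

Lemma reach_setP i j : reflect (reach i j) (j \in reach_set i).
Proof. by rewrite inE; apply: asboolP. Qed.

Lemma reach_refl i : reach i i.
Proof. by exists 0%N; rewrite expr0 mxE eqxx ltr01. Qed.

Lemma reach_trans i j k : reach i j -> reach j k -> reach i k.
Proof.
move=> [s hs] [t ht]; exists (s + t)%N; rewrite exprD -mulmxE.
exact: mulmx_entry_gt0 (nnegmxX _ K_ge0) (nnegmxX _ K_ge0) hs ht.
Qed.

Lemma reach_set_closed i : closed_set K (reach_set i).
Proof.
split; first by exists i; apply/reach_setP/reach_refl.
move=> j k /reach_setP hij hjk; apply/reach_setP/(reach_trans hij).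
by exists 1%N; rewrite expr1.
Qed.

Lemma reach_set_sub i j : j \in reach_set i -> reach_set j \subset reach_set i.
Proof.
move=> /reach_setP hij; apply/fintype.subsetP => k /reach_setP hjk.
exact/reach_setP/(reach_trans hij).
Qed.

(* A reachable set of minimal size is closed and irreducible. *)
Lemma closed_irreducible_reach_set i :
  exists2 j, j \in reach_set i & closed_irreducible K (reach_set j).
Proof.
have ii : i \in reach_set i by apply/reach_setP/reach_refl.
have [j ij jmin] := arg_minnP (fun j => #|reach_set j|) ii.
exists j => //; split; first exact: reach_set_closed.
suff back k : k \in reach_set j -> reach k j.
  by move=> k l /back hkj /reach_setP hjl; exact: reach_trans hkj hjl.
move=> jk; have sub_kj := reach_set_sub jk.
have /jmin : k \in reach_set i by apply: (fintype.subsetP (reach_set_sub ij)).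
rewrite (geq_leqif (subset_leqif_cards sub_kj)) => /eqP kj_eq.
by apply/reach_setP; rewrite kj_eq; apply/reach_setP/reach_refl.
Qed.

Hypothesis K_uci : unique_closed_irreducible K.

Lemma unique_closed_irreducible_doeblin :
  exists c, forall i, exists t, 0 < (K ^+ t.+1) i c.
Proof.
have [C [[[[c cC] _] _] C_uniq]] := K_uci.
exists c => i.
have [s Kis] : exists s, 0 < K i s.
  by apply: (psumr_gt0_exists (K_ge0 i)); rewrite K_rowsum1 ltr01.
have [j sj /C_uniq C_eq] := closed_irreducible_reach_set s.
have : c \in reach_set s by apply: (fintype.subsetP (reach_set_sub sj)); rewrite C_eq.
move=> /reach_setP [t Kt]; exists t.
by rewrite exprS -mulmxE (mulmx_entry_gt0 K_ge0 (nnegmxX _ K_ge0) Kis Kt).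
Qed.
End Reachability.

Definition fcons (T : Type) m (a : T) (g : {ffun 'I_m -> T}) : {ffun 'I_m.+1 -> T} :=
  [ffun i => if unlift ord0 i is Some j then g j else a].

Lemma fcons0 T m (a : T) (g : {ffun 'I_m -> T}) : fcons a g ord0 = a.
Proof. by rewrite ffunE unlift_none. Qed.

Lemma fconsS T m (a : T) (g : {ffun 'I_m -> T}) j : fcons a g (lift ord0 j) = g j.
Proof. by rewrite ffunE liftK. Qed.

Lemma fcons_eta T m (f : {ffun 'I_m.+1 -> T}) :
  f = fcons (f ord0) [ffun j => f (lift ord0 j)].
Proof. by apply/ffunP => i; rewrite ffunE; case: unliftP => [j ->|->]; rewrite ?ffunE. Qed.

Lemma sum_fcons (V : nmodType) (T : finType) m (G : {ffun 'I_m.+1 -> T} -> V) :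
  \sum_f G f = \sum_a \sum_(g : {ffun 'I_m -> T}) G (fcons a g).
Proof.
rewrite pair_big /= (reindex (fun x : T * {ffun 'I_m -> T} => fcons x.1 x.2)) //=.
exists (fun f : {ffun 'I_m.+1 -> T} => (f ord0, [ffun j => f (lift ord0 j)])).
  move=> [a g] _ /=; rewrite fcons0; congr (_, _).
  by apply/ffunP => j; rewrite ffunE fconsS.
by move=> f _ /=; rewrite -fcons_eta.
Qed.

Lemma sum_ffun0 (V : nmodType) (T : finType) (G : {ffun 'I_0 -> T} -> V) f0 :
  \sum_f G f = G f0.
Proof. by apply: big_pred1 => f /=; apply/esym/eqP/ffunP => [[]]. Qed.

Lemma forall_ordS (P : nat -> bool) k :
  [forall k' : 'I_k.+1, P k'] = P 0%N && [forall k' : 'I_k, P k'.+1].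
Proof.
apply/forallP/andP => [h|[h0 /forallP h] [[|j] hj] //].
  split; first exact: (h ord0).
  by apply/forallP => k'; have := h (lift ord0 k'); rewrite /= /bump leq0n.
exact: (h (Ordinal (hj : (j < k)%N))).
Qed.

Lemma fails0 m (x : {ffun 'I_m -> bool}) : fails x 0 = 0%N.
Proof. by rewrite /fails big_pred0 // => i; rewrite ltn0. Qed.

Lemma fails_fcons m b (x : {ffun 'I_m -> bool}) j :
  fails (fcons b x) j.+1 = ((~~ b) + fails x j)%N.
Proof.
rewrite /fails big_mkcond big_ord_recl /= fcons0; congr (_ + _)%N.
rewrite [RHS]big_mkcond; apply: eq_bigr => i _ /=.
by rewrite /bump leq0n ltnS fconsS.
Qed.

Lemma fails_le m (x : {ffun 'I_m -> bool}) j : (fails x j <= j)%N.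
Proof.
elim: m x j => [|m IH] x [|j]; rewrite ?fails0 //; first by rewrite /fails big_ord0.
rewrite (fcons_eta x) fails_fcons.
by have := IH [ffun j0 => x (lift ord0 j0)] j; case: (x ord0) => /=; lia.
Qed.

(* The event of [prob_S]: the n-th failure happens at trial n + k. *)
Definition S_event n k m (xi : {ffun 'I_m -> bool}) : bool :=
  (fails xi (k + n) == n) && [forall k' : 'I_k, fails xi (k' + n) != n].

Lemma S_event0S k m (x : {ffun 'I_m -> bool}) : S_event 0 k.+1 x = false.
Proof. by rewrite /S_event (forall_ordS (fun t => fails x (t + 0) != 0%N)) /= fails0 andbF. Qed.

Lemma S_event_success n k m (x : {ffun 'I_m -> bool}) :
  S_event n.+1 k.+1 (fcons true x) = S_event n.+1 k x.
Proof.
have fails_ltS : fails x n != n.+1 by rewrite ltn_eqF // ltnS fails_le.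
rewrite /S_event (forall_ordS (fun t => fails (fcons true x) (t + n.+1) != n.+1)).
rewrite addSn !fails_fcons !add0n /= fails_ltS; congr (_ && _).
by apply: eq_forallb => k'; rewrite addSn fails_fcons add0n.
Qed.

Lemma S_event_success0 n m (x : {ffun 'I_m -> bool}) : S_event n.+1 0 (fcons true x) = false.
Proof. by rewrite /S_event add0n fails_fcons add0n ltn_eqF // ltnS fails_le. Qed.

Lemma S_event_failure n k m (x : {ffun 'I_m -> bool}) :
  S_event n.+1 k (fcons false x) = S_event n k x.
Proof.
rewrite /S_event addnS fails_fcons add1n eqSS; congr (_ && _).
by apply: eq_forallb => k'; rewrite addnS fails_fcons add1n eqSS.
Qed.

Section EntrywiseConvergence.
Variables (R : realType) (n : nat).

Definition cvg_col m (V : nat -> 'cV[R]_m) (v : 'cV[R]_m) :=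
  forall i, ((fun L => V L i 0) @ \oo --> v i 0)%classic.

Lemma cvg_col_mul m (A : 'M[R]_(m, n)) V v :
  cvg_col V v -> cvg_col (fun L => A *m V L) (A *m v).
Proof.
move=> Vv i; rewrite mxE.
have -> : (fun L => (A *m V L) i 0) = \sum_j (fun L => A i j * V L j 0).
  by apply: funext => L; rewrite mxE fct_sumE.
apply: (big_ind2 (fun (u : nat -> R) x => (u @ \oo --> x)%classic)) => //.
- exact: cvg_cst.
- by move=> u x v' y; apply: cvgD.
- by move=> j _; apply: cvgM; [exact: cvg_cst | exact: Vv].
Qed.

Lemma cvg_colD (V W : nat -> 'cV[R]_n) v w :
  cvg_col V v -> cvg_col W w -> cvg_col (fun L => V L + W L) (v + w).
Proof.
move=> Vv Ww i; rewrite mxE.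
have -> : (fun L => (V L + W L) i 0) = (fun L => V L i 0) + (fun L => W L i 0).
  by apply: funext => L; rewrite mxE.
exact: cvgD.
Qed.

Lemma cvg_col_shift (V : nat -> 'cV[R]_n) v : cvg_col V v -> cvg_col (fun L => V L.+1) v.
Proof. by move=> Vv i; have := Vv i; rewrite -cvg_shiftS. Qed.

Lemma cvg_col_unique (V : nat -> 'cV[R]_n) v w : cvg_col V v -> cvg_col V w -> v = w.
Proof.
by move=> Vv Vw; apply/matrixP => i j; rewrite (ord1 j); exact: cvg_unique (Vv i) (Vw i).
Qed.

Lemma cvg_col_ext (V W : nat -> 'cV[R]_n) v : V =1 W -> cvg_col V v -> cvg_col W v.
Proof. by move=> VW; have -> : W = V by apply: funext => L; rewrite VW. Qed.

Lemma nondecreasing_cvg_col (V : nat -> 'cV[R]_n) B :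
  (forall L, lemx (V L) (V L.+1)) -> (forall L, lemx (V L) B) -> exists v, cvg_col V v.
Proof.
move=> V_mono V_bnd; exists (\col_i sup (range (fun L => V L i 0))) => i; rewrite mxE.
apply: nondecreasing_cvgn; first by apply/nondecreasing_seqP => L; exact: V_mono.
by exists (B i 0) => x [L _ <-]; exact: V_bnd.
Qed.

End EntrywiseConvergence.

Section RealSequences.
Variable R : realType.

Lemma cvg_div_natr (a : nat -> R) l D : (forall n, `|a n - l * n%:R| <= D) ->
  (a n / n%:R @[n --> \oo] --> l)%classic.
Proof.
move=> a_bnd.
have bnd n : (0 < n)%N -> `|a n / n%:R - l| <= (D + D) * harmonic n.
  move=> n_gt0; have n_pos : 0 < n%:R :> R by rewrite ltr0n.
  have -> : a n / n%:R - l = (a n - l * n%:R) / n%:R by field; rewrite lt0r_neq0.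
  have -> : harmonic n = (n%:R + 1)^-1 :> R by rewrite /harmonic /= -natr1.
  rewrite normrM normfV (gtr0_norm n_pos).
  have D_ge0 : 0 <= D by apply: le_trans (a_bnd n).
  apply: le_trans (ler_wpM2r _ (a_bnd n)) _; first by rewrite invr_ge0 ltW.
  have n1_ge1 : 1 <= n%:R :> R by rewrite ler1n.
  rewrite ler_pdivrMr // mulrAC ler_pdivlMr ?addr_gt0 //; nra.
apply: (@squeeze_cvgr _ _ _ _ (fun n => l - (D + D) * harmonic n)
                              (fun n => l + (D + D) * harmonic n)).
- by near=> n; rewrite /= -ler_distl bnd //; near: n; exists 1%N.
- have := cvgB (cvg_cst l) (cvgM (cvg_cst (D + D)) (@cvg_harmonic R)).
  by rewrite mulr0 subr0 => h; apply: h; exact: eventually_filter.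
- have := cvgD (cvg_cst l) (cvgM (cvg_cst (D + D)) (@cvg_harmonic R)).
  by rewrite mulr0 addr0 => h; apply: h; exact: eventually_filter.
Unshelve. all: by end_near.
Qed.

Lemma expr_le_expR (x : R) n : 0 <= x <= 1 -> (1 - x) ^+ n <= expR (- (x * n%:R)).
Proof.
case/andP => x_ge0 x_le1; rewrite -mulNr expRM_natr.
by rewrite lerXn2r ?nnegrE ?subr_ge0 ?expR_ge0 // expR_ge1Dx.
Qed.

End RealSequences.

Section SuccessFailureSplitting.
Variables (R : realType) (d : nat) (K : 'M[R]_d.+1) (p : 'I_d.+1 -> R).
Hypothesis K_ge0 : nnegmx K.
Hypothesis K_rowsum1 : forall i, \sum_j K i j = 1.
Hypothesis p01 : forall i, 0 < p i < 1.

Definition ones : 'cV[R]_d.+1 := const_mx 1.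
Definition qcol : 'cV[R]_d.+1 := ones - pcol p.

(* U i j (resp. F i j): probability of a success (resp. failure) at i followed by a move to j. *)
Definition U : 'M[R]_d.+1 := diag_mx (\row_i p i) *m K.
Definition F : 'M[R]_d.+1 := diag_mx (\row_i (1 - p i)) *m K.
Definition X := greenmx U.
Definition Q := X *m F.
Definition mean_S1 := X *m pcol p.

Fixpoint mean_S k : 'cV[R]_d.+1 := if k is k'.+1 then mean_S1 + Q *m mean_S k' else 0.

Lemma UE i j : U i j = p i * K i j.
Proof. by rewrite /U mul_diag_mx !mxE. Qed.

Lemma FE i j : F i j = (1 - p i) * K i j.
Proof. by rewrite /F mul_diag_mx !mxE. Qed.

Lemma p_gt0 i : 0 < p i. Proof. by case/andP: (p01 i). Qed.
Lemma subr1p_gt0 i : 0 < 1 - p i. Proof. by rewrite subr_gt0; case/andP: (p01 i). Qed.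

Lemma U_ge0 : nnegmx U.
Proof. by move=> i j; rewrite UE mulr_ge0 // ltW // p_gt0. Qed.

Lemma F_ge0 : nnegmx F.
Proof. by move=> i j; rewrite FE mulr_ge0 // ltW // subr1p_gt0. Qed.

Lemma U_add_F : U + F = K.
Proof. by apply/matrixP=> i j; rewrite mxE UE FE -mulrDl addrC subrK mul1r. Qed.

Lemma K_ones : K *m ones = ones.
Proof.
apply/matrixP=> i j; rewrite !mxE -[RHS](K_rowsum1 i).
by apply: eq_bigr => k _; rewrite mxE mulr1.
Qed.

Lemma U_ones : U *m ones = pcol p.
Proof. by apply/matrixP=> i j; rewrite -mulmxA K_ones mul_diag_mx !mxE mulr1. Qed.

Lemma F_ones : F *m ones = qcol.
Proof. by apply/matrixP=> i j; rewrite -mulmxA K_ones mul_diag_mx !mxE mulr1. Qed.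

Lemma U_rowsum_lt1 i : \sum_j U i j < 1.
Proof.
under eq_bigr do rewrite UE.
by rewrite -mulr_sumr K_rowsum1 mulr1; case/andP: (p01 i).
Qed.

Lemma X_ge0 : nnegmx X.
Proof. exact: greenmx_ge0 U_ge0 U_rowsum_lt1. Qed.

Lemma mulmx_1_sub_X : (1%:M - U) *m X = 1%:M.
Proof. exact: mulmx_1_sub_green U_ge0 U_rowsum_lt1. Qed.

Lemma mulmx_X_1_sub : X *m (1%:M - U) = 1%:M.
Proof. exact: mulmx_green_1_sub U_ge0 U_rowsum_lt1. Qed.

Lemma Q_ge0 : nnegmx Q. Proof. exact: nnegmxM X_ge0 F_ge0. Qed.

Lemma X_qcol : X *m qcol = ones.
Proof. by rewrite /qcol -U_ones -{1}(mul1mx ones) -mulmxBl mulmxA mulmx_X_1_sub mul1mx. Qed.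

Lemma Q_ones : Q *m ones = ones.
Proof. by rewrite /Q -mulmxA F_ones X_qcol. Qed.

Lemma Q_rowsum1 i : \sum_j Q i j = 1.
Proof.
have /matrixP/(_ i 0) := Q_ones; rewrite mxE /ones mxE => <-.
by apply: eq_bigr => j _; rewrite [const_mx _ _ _]mxE mulr1.
Qed.

Lemma one_sub_K_factor : 1%:M - K = (1%:M - U) *m (1%:M - Q).
Proof. by rewrite mulmxBr mulmx1 /Q mulmxA mulmx_1_sub_X mul1mx -U_add_F opprD addrA. Qed.

(* A path i -> c of length t + 1 can be run with t successes followed by one failure. *)
Lemma Q_entry_gt0 t i c : 0 < (K ^+ t.+1) i c -> 0 < Q i c.
Proof.
have KU t' : supp_sub (K ^+ t') (U ^+ t').
  elim: t' => [|t' IH]; first by rewrite !expr0.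
  have U_ge0 := U_ge0.
  rewrite !exprS -!mulmxE; apply: supp_sub_mul => //;
    [exact: nnegmxX | exact: nnegmxX | by move=> a b Kab; rewrite UE mulr_gt0 ?p_gt0].
have KF : supp_sub K F by move=> a b Kab; rewrite FE mulr_gt0 ?subr1p_gt0.
rewrite exprSr -mulmxE.
move=> /(supp_sub_mul (nnegmxX _ K_ge0) K_ge0 (nnegmxX _ U_ge0) F_ge0 (KU t) KF) /lt_le_trans.
apply.
exact: lemx_mul2r F_ge0 (exp_le_greenmx U_ge0 U_rowsum_lt1 t) i c.
Qed.

Lemma Q_doeblin : unique_closed_irreducible K ->
  exists c delta, 0 < delta /\ forall i, delta <= Q i c.
Proof.
move=> K_uci; have [c Kc] := unique_closed_irreducible_doeblin K_ge0 K_rowsum1 K_uci.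
have [i0 _ Qmin] := @arg_minP _ R _ c xpredT (fun i => Q i c) isT.
exists c, (Q i0 c); split; last by move=> i; exact: Qmin.
by have [t Kt] := Kc i0; exact: Q_entry_gt0 Kt.
Qed.

Definition trial_prob b i := if b then p i else 1 - p i.

Definition path_weight_from m (r : {ffun 'I_m -> 'I_d.+1}) (xi : {ffun 'I_m -> bool}) : R :=
  (\prod_(i : 'I_m) \prod_(j : 'I_m | val j == (val i).+1) K (r i) (r j)) *
  (\prod_(i : 'I_m) trial_prob (xi i) (r i)).

Lemma path_weightE m (eta : 'rV[R]_d.+1) (r : {ffun 'I_m.+1 -> 'I_d.+1}) xi :
  path_weight K p eta r xi = eta 0 (r ord0) * path_weight_from r xi.
Proof. by rewrite /path_weight /path_weight_from big_ord_recl /= big1 ?mulr1 ?mulrA. Qed.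

Lemma path_weight_from_fcons m a b (g : {ffun 'I_m.+1 -> 'I_d.+1}) x :
  path_weight_from (fcons a g) (fcons b x) =
  trial_prob b a * K a (g ord0) * path_weight_from g x.
Proof.
rewrite /path_weight_from big_ord_recl [in X in _ * X]big_ord_recl !fcons0.
have first_step : \prod_(j < m.+2 | val j == 1%N) K a (fcons a g j) = K a (g ord0).
  by rewrite big_mkcond big_ord_recl /= mul1r big_ord_recl /= fconsS big1_eq mulr1.
have later_steps (i : 'I_m.+1) :
   \prod_(j < m.+2 | val j == (bump 0 i).+1) K (fcons a g (lift ord0 i)) (fcons a g j)
   = \prod_(j < m.+1 | val j == (val i).+1) K (g i) (g j).
  rewrite big_mkcond big_ord_recl /= mul1r [RHS]big_mkcond.
  by apply: eq_bigr => j _; rewrite /= /bump !leq0n eqSS !fconsS.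
rewrite first_step (eq_bigr _ (fun i _ => later_steps i)).
under [in X in _ * X]eq_bigr do rewrite !fconsS.
rewrite /trial_prob; ring.
Qed.

Lemma prob_event_ext m (eta : 'rV[R]_d.+1) (E1 E2 : {ffun 'I_m -> bool} -> bool) :
  E1 =1 E2 -> prob_event K p eta E1 = prob_event K p eta E2.
Proof. by move=> E12; apply: eq_bigr => r _; apply: eq_bigr => x _; rewrite E12. Qed.

Lemma prob_event0 m (eta : 'rV[R]_d.+1) (E : {ffun 'I_m -> bool} -> bool) :
  E =1 xpred0 -> prob_event K p eta E = 0.
Proof.
by move=> E0; rewrite /prob_event big1 // => r _; rewrite big1 // => x _; rewrite E0 mulr0.
Qed.

Lemma prob_event_first_trial m (eta : 'rV[R]_d.+1) (E : {ffun 'I_m.+2 -> bool} -> bool) :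
  prob_event K p eta E =
  prob_event K p (eta *m U) (fun x => E (fcons true x)) +
  prob_event K p (eta *m F) (fun x => E (fcons false x)).
Proof.
have step b : prob_event K p (eta *m (if b then U else F)) (fun x => E (fcons b x)) =
    \sum_a \sum_(g : {ffun 'I_m.+1 -> 'I_d.+1}) \sum_(x : {ffun 'I_m.+1 -> bool})
      eta 0 a * (trial_prob b a * K a (g ord0) * path_weight_from g x) * (E (fcons b x))%:R.
  rewrite [RHS]exchange_big; under [RHS]eq_bigr do rewrite exchange_big.
  apply: eq_bigr => g _; apply: eq_bigr => x _.
  rewrite path_weightE mxE !mulr_suml; apply: eq_bigr => a _.
  by case: b; rewrite /trial_prob ?UE ?FE; ring.
rewrite (step true) (step false) -!big_split /= /prob_event sum_fcons.
apply: eq_bigr => a _.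
rewrite -big_split /=; apply: eq_bigr => g _.
rewrite sum_fcons big_bool /=; congr (_ + _); apply: eq_bigr => x _.
  by rewrite path_weightE fcons0 path_weight_from_fcons.
by rewrite path_weightE fcons0 path_weight_from_fcons.
Qed.

Lemma prob_event_one_trial (eta : 'rV[R]_d.+1) (E : {ffun 'I_1 -> bool} -> bool) x0 :
  prob_event K p eta E = \sum_a \sum_b eta 0 a * trial_prob b a * (E (fcons b x0))%:R.
Proof.
rewrite /prob_event sum_fcons; apply: eq_bigr => a _.
rewrite (sum_ffun0 _ [ffun=> a]) sum_fcons; apply: eq_bigr => b _.
rewrite (sum_ffun0 _ x0) path_weightE fcons0 /path_weight_from !big_ord1.
by rewrite big_mkcond big_ord1 /= mul1r !fcons0.
Qed.

(* prob_S_vec n k is the column (P_i(S_n = k))_i; the recursion conditions on the first trial. *)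
Fixpoint prob_S_vec n : nat -> 'cV[R]_d.+1 :=
  match n with
  | 0 => fun k => if k is 0 then ones else 0
  | n'.+1 => fix prob_S_vec_n k :=
      if k is k'.+1 then U *m prob_S_vec_n k' + F *m prob_S_vec n' k'.+1
      else F *m prob_S_vec n' 0
  end.

Lemma prob_S_vecS0 n : prob_S_vec n.+1 0 = F *m prob_S_vec n 0. Proof. by []. Qed.
Lemma prob_S_vecSS n k :
  prob_S_vec n.+1 k.+1 = U *m prob_S_vec n.+1 k + F *m prob_S_vec n k.+1.
Proof. by []. Qed.

Lemma prob_event_S_event m n k (eta : 'rV[R]_d.+1) : (n + k = m.+1)%N ->
  prob_event K p eta (@S_event n k m.+1) = (eta *m prob_S_vec n k) 0 0.
Proof.
elim: m n k eta => [|m IH] [|n] k eta nk.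
- have -> : k = 1%N by lia.
  by rewrite prob_event0 ?mulmx0 ?mxE // => x; rewrite S_event0S.
- have [-> ->] : n = 0%N /\ k = 0%N by lia.
  rewrite (prob_event_one_trial _ _ [ffun=> false]) prob_S_vecS0 /= F_ones mxE.
  apply: eq_bigr => a _; rewrite big_bool /S_event /= !fails_fcons !fails0 /=.
  have -> : forall P : pred 'I_0, [forall k', P k'] by move=> P; apply/forallP => [[]].
  by rewrite !mxE mulr0 add0r mulr1.
- have [k' ->] : exists k', k = k'.+1 by exists k.-1; lia.
  by rewrite prob_event0 ?mulmx0 ?mxE // => x; rewrite S_event0S.
rewrite prob_event_first_trial (prob_event_ext _ (@S_event_failure n k m.+1)) IH; last by lia.
case: k nk => [|k] nk.
  by rewrite prob_event0 ?add0r ?mulmxA // => x; rewrite S_event_success0.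
rewrite (prob_event_ext _ (@S_event_success n k m.+1)) IH; last by lia.
by rewrite prob_S_vecSS mulmxDr !mulmxA [RHS]mxE.
Qed.

Lemma prob_SE n k (eta : 'rV[R]_d.+1) : (0 < n + k)%N ->
  prob_S K p eta n k = (eta *m prob_S_vec n k) 0 0.
Proof.
suff gen m : (n + k)%N = m -> (0 < m)%N ->
    prob_event K p eta (@S_event n k m) = (eta *m prob_S_vec n k) 0 0 by exact: gen.
by case: m => // m nk _; exact: prob_event_S_event.
Qed.

Lemma prob_S_vec_ge0 n k : nnegmx (prob_S_vec n k).
Proof.
elim: n k => [|n IHn] k; first by case: k => [|k] i j; rewrite mxE ?ler01.
have U_ge0 := U_ge0; have F_ge0 := F_ge0.
elim: k => [|k IHk]; first exact: nnegmxM.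
by rewrite prob_S_vecSS; apply: nnegmxD; apply: nnegmxM.
Qed.

Lemma mean_S_ge0 n : nnegmx (mean_S n).
Proof.
elim: n => [|n IH] /=; first by move=> i j; rewrite mxE.
apply: nnegmxD; last exact: nnegmxM Q_ge0 IH.
by apply: nnegmxM X_ge0 _ => i j; rewrite mxE ltW ?p_gt0.
Qed.

Lemma mean_S_fix n : mean_S n.+1 = U *m (mean_S n.+1 + ones) + F *m mean_S n.
Proof.
have mean_S_eq : (1%:M - U) *m mean_S n.+1 = pcol p + F *m mean_S n.
  by rewrite /= /mean_S1 /Q -mulmxA -mulmxDr mulmxA mulmx_1_sub_X mul1mx.
by rewrite mulmxDr U_ones -addrA -mean_S_eq mulmxBl mul1mx addrC subrK.
Qed.

Definition cdf_S_vec n L := \sum_(k < L) prob_S_vec n k.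
Definition partial_mean_S n L := \sum_(k < L) (k%:R : R) *: prob_S_vec n k.

Lemma cdf_S_vec0 L : cdf_S_vec 0 L.+1 = ones.
Proof. by rewrite /cdf_S_vec big_ord_recl /= big1 ?addr0. Qed.

Lemma partial_mean_S0 L : partial_mean_S 0 L = 0.
Proof. by rewrite /partial_mean_S big1 // => [[[|k] hk]] _ /=; rewrite ?scale0r ?scaler0. Qed.

Lemma cdf_S_vecSS n L :
  cdf_S_vec n.+1 L.+1 = U *m cdf_S_vec n.+1 L + F *m cdf_S_vec n L.+1.
Proof.
rewrite /cdf_S_vec big_ord_recl [in RHS]big_ord_recl prob_S_vecS0 mulmxDr !mulmx_sumr.
under eq_bigr do rewrite lift0 prob_S_vecSS.
rewrite big_split /= addrCA; congr (_ + (_ + _)); by apply: eq_bigr => i _; rewrite lift0.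
Qed.

Lemma partial_mean_SSS n L : partial_mean_S n.+1 L.+1 =
  U *m (partial_mean_S n.+1 L + cdf_S_vec n.+1 L) + F *m partial_mean_S n L.+1.
Proof.
rewrite /partial_mean_S /cdf_S_vec big_ord_recl [in RHS]big_ord_recl !scale0r !add0r.
under eq_bigr do rewrite lift0 prob_S_vecSS scalerDr !scalemxAr.
rewrite big_split /= -!mulmx_sumr -big_split /=; congr (_ + _); congr (_ *m _).
  by apply: eq_bigr => i _; rewrite -natr1 scalerDl scale1r.
all: by apply: eq_bigr => i _; rewrite lift0.
Qed.

Lemma partial_mean_S_succ n L :
  partial_mean_S n L.+1 = partial_mean_S n L + L%:R *: prob_S_vec n L.
Proof. by rewrite /partial_mean_S big_ord_recr. Qed.

Lemma cdf_S_vec_le1 n L : lemx (cdf_S_vec n L) ones.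
Proof.
have zero_le1 : lemx 0 ones by move=> i j; rewrite !mxE ler01.
elim: n L => [|n IHn] L.
  by case: L => [|L]; rewrite ?cdf_S_vec0 /cdf_S_vec ?big_ord0 // => i j.
elim: L => [|L IHL]; first by rewrite /cdf_S_vec big_ord0.
rewrite cdf_S_vecSS -K_ones -U_add_F mulmxDl.
by apply: lemxD; apply: lemx_mul2l => //; [exact: U_ge0 | exact: F_ge0].
Qed.

Lemma partial_mean_S_le n L : lemx (partial_mean_S n L) (mean_S n).
Proof.
elim: n L => [|n IHn] L; first by rewrite partial_mean_S0 => i j; rewrite /= !mxE.
elim: L => [|L IHL]; first by move=> i j; rewrite /partial_mean_S big_ord0 mxE mean_S_ge0.
rewrite partial_mean_SSS [in X in lemx _ X]mean_S_fix.
apply: lemxD; apply: lemx_mul2l => //; [exact: U_ge0 | | exact: F_ge0].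
exact: lemxD (cdf_S_vec_le1 _ _).
Qed.

Lemma cdf_S_vec_nondecreasing n L : lemx (cdf_S_vec n L) (cdf_S_vec n L.+1).
Proof. by move=> i j; rewrite /cdf_S_vec big_ord_recr mxE lerDl prob_S_vec_ge0. Qed.

Lemma partial_mean_S_nondecreasing n L : lemx (partial_mean_S n L) (partial_mean_S n L.+1).
Proof.
move=> i j; rewrite partial_mean_S_succ mxE lerDl mxE.
by rewrite mulr_ge0 ?prob_S_vec_ge0.
Qed.

(* The monotone limits solve the linear equations characterising [ones] and [mean_S n], which
   have unique solutions since 1 - U is invertible. *)
Lemma cvg_cdf_S_vec n : cvg_col (cdf_S_vec n) ones.
Proof.
elim: n => [|n IH].
  move=> i; rewrite -cvg_shiftS /=.
  by under eq_fun do rewrite cdf_S_vec0; exact: cvg_cst.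
have [t cdf_t] := nondecreasing_cvg_col (@cdf_S_vec_nondecreasing n.+1) (@cdf_S_vec_le1 n.+1).
have t_eq : t = U *m t + F *m ones.
  apply: cvg_col_unique (cvg_col_shift cdf_t) _.
  apply: cvg_col_ext (fun L => esym (cdf_S_vecSS n L)) _.
  by apply: cvg_colD; apply: cvg_col_mul => //; exact: cvg_col_shift.
suff -> : ones = t by [].
have : (1%:M - U) *m t = qcol by rewrite mulmxBl mul1mx {1}t_eq addrAC subrr add0r F_ones.
by move=> qcol_eq; rewrite -X_qcol -qcol_eq mulmxA mulmx_X_1_sub mul1mx.
Qed.

Lemma cvg_partial_mean_S n : cvg_col (partial_mean_S n) (mean_S n).
Proof.
elim: n => [|n IH].
  by move=> i; under eq_fun do rewrite partial_mean_S0; rewrite /= !mxE; exact: cvg_cst.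
have [s sum_s] :=
  nondecreasing_cvg_col (@partial_mean_S_nondecreasing n.+1) (@partial_mean_S_le n.+1).
have s_eq : s = U *m (s + ones) + F *m mean_S n.
  apply: cvg_col_unique (cvg_col_shift sum_s) _.
  apply: cvg_col_ext (fun L => esym (partial_mean_SSS n L)) _.
  apply: cvg_colD; apply: cvg_col_mul => //; last exact: cvg_col_shift.
  exact: cvg_colD (cvg_cdf_S_vec n.+1).
suff -> : mean_S n.+1 = s by [].
have linear_eq v : v = U *m (v + ones) + F *m mean_S n ->
    (1%:M - U) *m v = pcol p + F *m mean_S n.
  by move=> v_eq; rewrite mulmxBl mul1mx {1}v_eq mulmxDr U_ones addrAC [U *m v + _]addrC addrK.
rewrite -[s]mul1mx -mulmx_X_1_sub -mulmxA (linear_eq _ s_eq).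
by rewrite -(linear_eq _ (mean_S_fix n)) mulmxA mulmx_X_1_sub mul1mx.
Qed.

Lemma ES_mean_S n (eta : 'rV[R]_d.+1) : ES K p eta n = ((eta *m mean_S n) 0 0)%:E.
Proof.
have partial_sumE L : \sum_(0 <= k < L) ((k%:R * prob_S K p eta n k)%:E) =
    ((eta *m partial_mean_S n L) 0 0)%:E.
  rewrite sumEFin; congr (_%:E); rewrite big_mkord /partial_mean_S mulmx_sumr summxE.
  apply: eq_bigr => k _; rewrite -scalemxAr mxE.
  by case: k => [[|k] hk] /=; rewrite ?mul0r // prob_SE // addnS.
apply: cvg_lim => //; under eq_fun do rewrite partial_sumE.
apply: cvg_EFin; first by near=> L.
rewrite /comp /=.
exact: (cvg_col_mul (A := eta) (@cvg_partial_mean_S n)).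
Unshelve. all: by end_near.
Qed.

Section StationaryLaw.
Variable mu : 'rV[R]_d.+1.
Hypothesis mu_stationary : is_stationary K mu.

Definition pbar := (mu *m pcol p) 0 0.
Definition lam := pbar / (1 - pbar).
Definition nu : 'rV[R]_d.+1 := (1 - pbar)^-1 *: (mu *m F).
Definition Mmx := 1%:M - K + (1 - pbar)^-1 *: (qcol *m mu *m diag_mx (\row_i (1 - p i)) *m K).
Definition rvec := invmx Mmx *m pcol p - lam *: ones.

Lemma mu_ge0 j : 0 <= mu 0 j. Proof. by case: mu_stationary => [[]]. Qed.
Lemma mu_sum1 : \sum_j mu 0 j = 1. Proof. by case: mu_stationary => [[]]. Qed.
Lemma muK : mu *m K = mu. Proof. by case: mu_stationary. Qed.

Lemma row_ones (v : 'rV[R]_d.+1) : (v *m ones) 0 0 = \sum_j v 0 j.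
Proof. by rewrite mxE; apply: eq_bigr => j _; rewrite mxE mulr1. Qed.

Lemma mu_qcol : (mu *m qcol) 0 0 = 1 - pbar.
Proof. by rewrite /qcol mulmxBr mxE [X in _ + X]mxE row_ones mu_sum1. Qed.

Lemma subr1_pbar_gt0 : 0 < 1 - pbar.
Proof.
rewrite -mu_qcol mxE.
have [j mu_j] : exists j, 0 < mu 0 j by apply: (psumr_gt0_exists mu_ge0); rewrite mu_sum1.
rewrite (bigD1 j) //= ltr_wpDr ?mulr_gt0 ?sumr_ge0 // => [k _|]; last by rewrite !mxE subr1p_gt0.
by rewrite mulr_ge0 ?mu_ge0 // !mxE subr_ge0 ltW //; case/andP: (p01 k).
Qed.

Lemma subr1_pbar_neq0 : 1 - pbar != 0. Proof. exact: lt0r_neq0 subr1_pbar_gt0. Qed.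

Lemma muF : mu *m F = mu *m (1%:M - U).
Proof.
by rewrite mulmxBr mulmx1; apply/eqP; rewrite eq_sym subr_eq addrC -mulmxDr U_add_F muK.
Qed.

Lemma nu_ge0 j : 0 <= nu 0 j.
Proof.
have mu_nneg : nnegmx mu by move=> i k; rewrite (ord1 i) mu_ge0.
rewrite mxE mulr_ge0 ?invr_ge0 ?(ltW subr1_pbar_gt0) //.
exact: (nnegmxM mu_nneg F_ge0).
Qed.

Lemma nu_sum1 : \sum_j nu 0 j = 1.
Proof.
rewrite -row_ones /nu -scalemxAl -mulmxA F_ones mxE mu_qcol mulVf //.
exact: subr1_pbar_neq0.
Qed.

(* nu is the law of the state at a failure when the chain is stationary. *)
Lemma nuQ : nu *m Q = nu.
Proof. by rewrite /nu -scalemxAl /Q mulmxA muF -(mulmxA mu) mulmx_1_sub_X mulmx1 -muF. Qed.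

Lemma Mmx_split : Mmx = 1%:M - K + qcol *m nu.
Proof. by rewrite /Mmx /nu -scalemxAr !mulmxA. Qed.

Lemma mu_Mmx : mu *m Mmx = (1 - pbar) *: nu.
Proof.
rewrite Mmx_split mulmxDr mulmxBr mulmx1 muK subrr add0r mulmxA.
by rewrite (mx11_scalar (mu *m qcol)) mu_qcol mul_scalar_mx.
Qed.

Section Poisson.
Variables (c : 'I_d.+1) (delta : R).
Hypothesis delta_gt0 : 0 < delta.
Hypothesis delta_le_Q : forall i, delta <= Q i c.

Lemma Mmx_unit : Mmx \in unitmx.
Proof.
apply: mxker0_unitmx => y My0.
have nu_y : nu *m y = 0.
  have /eqP : mu *m (Mmx *m y) = 0 by rewrite My0 mulmx0.
  by rewrite mulmxA mu_Mmx -scalemxAl scaler_eq0 (negbTE subr1_pbar_neq0) => /eqP.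
have IKy : (1%:M - K) *m y = 0.
  by rewrite Mmx_split mulmxDl -mulmxA nu_y mulmx0 addr0 in My0.
have Qy : Q *m y = y.
  have := congr1 (mulmx X) IKy.
  rewrite mulmx0 one_sub_K_factor !mulmxA mulmx_X_1_sub mul1mx.
  by rewrite mulmxBl mul1mx => /eqP; rewrite subr_eq0 => /eqP <-.
have y_const := doeblin_fixed_const Q_ge0 Q_rowsum1 delta_le_Q delta_gt0 Qy.
apply/matrixP => i j; rewrite (ord1 j) mxE.
have /matrixP/(_ 0 0) := nu_y; rewrite mxE mxE.
under eq_bigr do rewrite (y_const _ i).
by rewrite -mulr_suml nu_sum1 mul1r.
Qed.

Lemma nu_invMmx_p : (nu *m (invmx Mmx *m pcol p)) 0 0 = lam.
Proof.
have Mx : Mmx *m (invmx Mmx *m pcol p) = pcol p by rewrite mulmxA (mulmxV Mmx_unit) mul1mx.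
have := congr1 (mulmx mu) Mx; rewrite mulmxA mu_Mmx -scalemxAl => /matrixP/(_ 0 0).
rewrite mxE => e; apply: (mulfI subr1_pbar_neq0).
by rewrite e /lam mulrCA mulfV ?mulr1 ?subr1_pbar_neq0.
Qed.

Lemma nu_rvec : (nu *m rvec) 0 0 = 0.
Proof.
rewrite /rvec mulmxBr -scalemxAr mxE [X in _ + X]mxE [X in _ - X]mxE.
by rewrite nu_invMmx_p row_ones nu_sum1 mulr1 subrr.
Qed.

Lemma poisson_eq : (1%:M - Q) *m rvec = mean_S1 - lam *: ones.
Proof.
pose x := invmx Mmx *m pcol p.
have IKx : (1%:M - K) *m x = pcol p - lam *: qcol.
  have Mx : Mmx *m x = pcol p by rewrite mulmxA (mulmxV Mmx_unit) mul1mx.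
  rewrite Mmx_split mulmxDl -mulmxA (mx11_scalar (nu *m x)) nu_invMmx_p mul_mx_scalar in Mx.
  by rewrite -Mx addrK.
have IQx : (1%:M - Q) *m x = mean_S1 - lam *: ones.
  have := congr1 (mulmx X) IKx; rewrite one_sub_K_factor !mulmxA mulmx_X_1_sub mul1mx => ->.
  by rewrite mulmxBr -scalemxAr X_qcol.
by rewrite /rvec mulmxBr IQx -scalemxAr mulmxBl mul1mx Q_ones subrr scaler0 subr0.
Qed.

Lemma mean_S_expansion k : mean_S k = (lam * k%:R) *: ones + rvec - Q ^+ k *m rvec.
Proof.
have Qr : Q *m rvec = rvec - (mean_S1 - lam *: ones).
  by rewrite -poisson_eq mulmxBl mul1mx opprB addrC subrK.
elim: k => [|k IH]; first by rewrite /= mulr0 scale0r add0r expr0 mul1mx subrr.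
rewrite /= IH mulmxBr mulmxDr -scalemxAr Q_ones Qr exprS -mulmxE -mulmxA.
move: (Q *m (Q ^+ k *m rvec)) mean_S1 rvec ones => t f r o.
rewrite -natr1 mulrDr mulr1 scalerDl.
by apply/matrixP => i j; rewrite !mxE; ring.
Qed.

Lemma mean_S_bound k (eta : 'rV[R]_d.+1) : is_distr eta ->
  `|(eta *m mean_S k) 0 0 - (lam * k%:R + (eta *m rvec) 0 0)| <=
    (1 - delta) ^+ k * (\sum_j `|rvec j 0| + \sum_j `|rvec j 0|).
Proof.
move=> [eta_ge0 eta_sum1].
have rvec_le j : `|rvec j 0| <= \sum_j `|rvec j 0| by rewrite (bigD1 j) //= lerDl sumr_ge0.
set W := (1 - delta) ^+ k * _.
have Qkr_le i : `|(Q ^+ k *m rvec) i 0| <= W.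
  have := doeblin_mixing Q_ge0 Q_rowsum1 delta_le_Q nu_ge0 nu_sum1 nuQ rvec_le k i.
  by rewrite nu_rvec subr0.
have -> : (eta *m mean_S k) 0 0 - (lam * k%:R + (eta *m rvec) 0 0) =
    - (eta *m (Q ^+ k *m rvec)) 0 0.
  rewrite mean_S_expansion mulmxBr mulmxDr -scalemxAr.
  rewrite (mx11_scalar (eta *m ones)) row_ones eta_sum1.
  by move: (eta *m rvec) (eta *m _) => a b; rewrite !mxE eqxx mulr1n; ring.
rewrite normrN mxE (le_trans (ler_norm_sum _ _ _)) //.
rewrite -[W]mul1r -eta_sum1 mulr_suml ler_sum // => j _.
by rewrite normrM ger0_norm // ler_wpM2l.
Qed.

Lemma mean_S_exp_bound : exists2 C, 0 < C &
  forall k (eta : 'rV[R]_d.+1), is_distr eta ->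
  `|(eta *m mean_S k) 0 0 - (lam * k%:R + (eta *m rvec) 0 0)| <= C * expR (- (delta * k%:R)).
Proof.
set B := \sum_j `|rvec j 0|.
have B_ge0 : 0 <= B by rewrite sumr_ge0.
exists (B + B + 1) => [|k eta eta_distr]; first by rewrite ltr_wpDl ?addr_ge0.
apply: le_trans (mean_S_bound k eta_distr) _; rewrite [leRHS]mulrC.
have delta_le1 := delta_le1 Q_ge0 Q_rowsum1 delta_le_Q.
apply: ler_pM; rewrite ?addr_ge0 ?exprn_ge0 ?subr_ge0 ?lerDl ?ler01 //.
by rewrite expr_le_expR // ltW.
Qed.

Lemma cvg_mean_S_div (eta : 'rV[R]_d.+1) : is_distr eta ->
  ((eta *m mean_S n) 0 0 / n%:R @[n --> \oo] --> lam)%classic.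
Proof.
set B := \sum_j `|rvec j 0|; set e := (eta *m rvec) 0 0.
move=> eta_distr; apply: (@cvg_div_natr _ _ _ (B + B + `|e|)) => n.
set a := (eta *m mean_S n) 0 0.
have -> : a - lam * n%:R = (a - (lam * n%:R + e)) + e by ring.
apply: le_trans (ler_normD _ _) _; rewrite lerD2r (le_trans (mean_S_bound n eta_distr)) //.
have := delta_le1 Q_ge0 Q_rowsum1 delta_le_Q; have := delta_gt0 => ? ?.
by rewrite ler_piMl ?addr_ge0 ?sumr_ge0 //; apply: exprn_ile1; lra.
Qed.

End Poisson.

End StationaryLaw.
End SuccessFailureSplitting.

Theorem proposition3p1 (R : realType) (N : nat) (K : 'M[R]_N)
    (p : 'I_N -> R) (mu : 'rV[R]_N) :
  stochastic K -> unique_closed_irreducible K ->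
  (forall i, 0 < p i < 1) -> is_stationary K mu ->
  let pbar := (mu *m pcol p) 0 0 in
  let lam := pbar / (1 - pbar) in
  let Dq := diag_mx (\row_i (1 - p i)) in
  let M := 1%:M - K + (1 - pbar)^-1 *: ((const_mx 1 - pcol p) *m mu *m Dq *m K) in
  let rv := invmx M *m pcol p - lam *: const_mx 1 in
  M \in unitmx /\
  (forall eta : 'rV[R]_N, is_distr eta ->
     ((fun n : nat => (ES K p eta n * (n%:R^-1)%:E)%E) @ \oo --> lam%:E)%classic) /\
  exists c1 c2 : R, 0 < c1 /\ 0 < c2 /\
    forall (n : nat) (eta : 'rV[R]_N), is_distr eta ->
      (`| ES K p eta n - (lam * n%:R + (eta *m rv) 0 0)%:E | <=
         (c1 * expR (- (c2 * n%:R)))%:E)%E.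
Proof.
case: N K p mu => [|d] K p mu; first by move=> _ [C [[[[[]]]]]].
move=> [K_ge0 K_rowsum1] K_uci p01 mu_stationary /=.
have [c [delta [delta_gt0 delta_le_Q]]] := Q_doeblin K_ge0 K_rowsum1 p01 K_uci.
have ES_eq := ES_mean_S K_ge0 K_rowsum1 p01.
split; first exact (Mmx_unit K_ge0 K_rowsum1 p01 mu_stationary delta_gt0 delta_le_Q).
split.
  move=> eta eta_distr; under eq_fun do rewrite ES_eq -EFinM.
  apply: cvg_EFin; first by near=> n.
  exact (cvg_mean_S_div K_ge0 K_rowsum1 p01 mu_stationary delta_gt0 delta_le_Q eta_distr).
have [C C_gt0 bound] := mean_S_exp_bound K_ge0 K_rowsum1 p01 mu_stationary delta_gt0 delta_le_Q.
exists C, delta; do 2!split => //.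
by move=> n eta eta_distr; rewrite ES_eq -EFinB lee_fin bound.
Unshelve. all: by end_near.
Qed.
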